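(* Let $G(\vec x)$ be a positive guard over the variables $\vec x$, and let $h$ be a history. Then the set of solutions of the guard instantiation problem $(h,G(\vec x))$ is finite. Moreover, every solution uses only constants that appear in $h$.
   Context: A history $h$ is a finite list of sessions $h_1,\dots,h_{|h|}$. Each session is a finite set of events $p(c_1,\dots,c_n)$, where $p$ is an uninterpreted predicate symbol and the $c_i$ are constants. Simple guards are generated by the grammar $$\gamma::=p(\vec u)\mid\gamma\wedge\gamma\mid\mathbf{G}^{-1}\gamma\mid\mathbf{F}^{-1}\gamma,$$ where $\vec u$ is a list of variables and constants (no function symbols). Positive guards $G(\vec x)$ over variables $\vec x$ are formulas whose only variables are among $\vec x$, generated by $$G::=\gamma(\vec x)\mid G\wedge G\mid G\vee G\mid\mathbf{G}^{-1}G\mid\mathbf{F}^{-1}G\mid G\,\mathbf{S}\,G.$$ For closed formulas and $1\le i\le|h|$: - $(h,i)\models p(\vec c)$ iff $p(\vec c)\in h_i$; - $\wedge$ and $\vee$ are interpreted classically; - $(h,i)\models\psi_1\,\mathbf{S}\,\psi_2$ iff there is $j\le i$ with $(h,j)\models\psi_2$ and $(h,k)\models\psi_1$ for all $k$ with $j<k\le i$; - $\mathbf{F}^{-1}\psi$ holds at $i$ iff $\psi$ holds at some $j\le i$; - $\mathbf{G}^{-1}\psi$ holds at $i$ iff $\psi$ holds at all $j\le i$. We write $h\models\psi$ for $(h,|h|)\models\psi$. The guard instantiation problem $(h,G(\vec x))$ asks for a list $\vec u$ of constants such that $h\models G(\vec u)$. Any such list is called a solution. *)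

From Stdlib Require Import List Arith.
Import ListNotations.
Set Implicit Arguments.

Inductive term (C : Type) : Type :=
| TVar : nat -> term C
| TCst : C -> term C.
Arguments TVar {C} _.
Arguments TCst {C} _.

(* Simple guards: gamma ::= p(u) | gamma /\ gamma | G^-1 gamma | F^-1 gamma *)
Inductive sguard (P C : Type) : Type :=
| SAtom : P -> list (term C) -> sguard P C
| SAnd  : sguard P C -> sguard P C -> sguard P C
| SHist : sguard P C -> sguard P C
| SOnce : sguard P C -> sguard P C.

(* Positive guards: G ::= gamma(x) | G/\G | G\/G | G^-1 G | F^-1 G | G S G *)
Inductive pguard (P C : Type) : Type :=
| PSimple : sguard P C -> pguard P C
| PAnd   : pguard P C -> pguard P C -> pguard P C
| POr    : pguard P C -> pguard P C -> pguard P C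
| PHist  : pguard P C -> pguard P C
| POnce  : pguard P C -> pguard P C
| PSince : pguard P C -> pguard P C -> pguard P C.

(* Events p(c1,...,cn), sessions (finite sets of events, as lists),
   histories (finite lists of sessions). *)
Definition event (P C : Type) : Type := (P * list C)%type.
Definition session (P C : Type) : Type := list (event P C).
Definition history (P C : Type) : Type := list (session P C).

Fixpoint svars {P C : Type} (s : sguard P C) : list nat :=
  match s with
  | SAtom _ ts => flat_map (fun t => match t with TVar x => [x] | TCst _ => [] end) ts
  | SAnd a b => svars a ++ svars b
  | SHist a => svars a
  | SOnce a => svars a
  end.

Fixpoint positive_guard {P C : Type} (xs : list nat) (G : pguard P C) : Prop :=
  match G with
  | PSimple s => forall v, In v (svars s) <-> In v xs
  | PAnd a b | POr a b | PSince a b => positive_guard xs a /\ positive_guard xs b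
  | PHist a | POnce a => positive_guard xs a
  end.

Fixpoint lookup {C : Type} (xs : list nat) (u : list C) (x : nat) : option C :=
  match xs, u with
  | y :: xs', c :: u' => if Nat.eqb x y then Some c else lookup xs' u' x
  | _, _ => None
  end.

Definition subst_term {C : Type} (xs : list nat) (u : list C) (t : term C) : term C :=
  match t with
  | TVar x => match lookup xs u x with Some c => TCst c | None => TVar x end
  | TCst c => TCst c
  end.

Fixpoint ssubst {P C : Type} (xs : list nat) (u : list C) (s : sguard P C) : sguard P C :=
  match s with
  | SAtom p ts => SAtom p (map (subst_term xs u) ts)
  | SAnd a b => SAnd (ssubst xs u a) (ssubst xs u b)
  | SHist a => SHist (ssubst xs u a)
  | SOnce a => SOnce (ssubst xs u a)
  end.

Fixpoint psubst {P C : Type} (xs : list nat) (u : list C) (G : pguard P C) : pguard P C :=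
  match G with
  | PSimple s => PSimple (ssubst xs u s)
  | PAnd a b => PAnd (psubst xs u a) (psubst xs u b)
  | POr a b => POr (psubst xs u a) (psubst xs u b)
  | PHist a => PHist (psubst xs u a)
  | POnce a => POnce (psubst xs u a)
  | PSince a b => PSince (psubst xs u a) (psubst xs u b)
  end.

(* Semantics of closed formulas at position i (1-based: h_i = nth (i-1) h). *)
Definition term_val {C : Type} (t : term C) : option C :=
  match t with TVar _ => None | TCst c => Some c end.

Fixpoint ssat {P C : Type} (h : history P C) (i : nat) (s : sguard P C) : Prop :=
  match s with
  | SAtom p ts =>
      1 <= i <= length h /\
      exists cs, map term_val ts = map Some cs /\ In (p, cs) (nth (i - 1) h [])
  | SAnd a b => ssat h i a /\ ssat h i b
  | SHist a => forall j, 1 <= j <= i -> ssat h j a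
  | SOnce a => exists j, 1 <= j <= i /\ ssat h j a
  end.

Fixpoint psat {P C : Type} (h : history P C) (i : nat) (G : pguard P C) : Prop :=
  match G with
  | PSimple s => ssat h i s
  | PAnd a b => psat h i a /\ psat h i b
  | POr a b => psat h i a \/ psat h i b
  | PHist a => forall j, 1 <= j <= i -> psat h j a
  | POnce a => exists j, 1 <= j <= i /\ psat h j a
  | PSince a b => exists j, 1 <= j <= i /\ psat h j b /\
                    forall k, j < k <= i -> psat h k a
  end.

(* h |= psi  iff  (h, |h|) |= psi  (only meaningful for nonempty h). *)
Definition models {P C : Type} (h : history P C) (G : pguard P C) : Prop :=
  1 <= length h /\ psat h (length h) G.

Definition is_solution {P C : Type} (h : history P C) (xs : list nat)
  (G : pguard P C) (u : list C) : Prop :=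
  length u = length xs /\ models h (psubst xs u G).

Definition appears_in {P C : Type} (h : history P C) (c : C) : Prop :=
  exists s, In s h /\ exists e, In e s /\ In c (snd e).

From Stdlib Require Import List Arith Lia.
Import ListNotations.

(* Each leaf of a positive guard mentions every variable of [xs], and a leaf
   can only hold at an actual position of [h] after some atom of it has been
   matched by an event of [h].  Hence every constant substituted for a
   variable occurs in [h], and the solutions lie among the finitely many
   tuples of length [length xs] over the constants of [h]. *)

Definition history_constants {P C : Type} (h : history P C) : list C :=
  flat_map (flat_map snd) h.

Lemma appears_in_history_constants {P C : Type} (h : history P C) (c : C) :
  appears_in h c <-> In c (history_constants h).
Proof.
  unfold appears_in, history_constants. rewrite in_flat_map.
  split; intros [s [Hs Hc]]; exists s; split; auto; apply in_flat_map; auto.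
Qed.

Lemma lookup_complete {C : Type} (xs : list nat) (u : list C) (c : C) :
  NoDup xs -> length u = length xs -> In c u ->
  exists x, In x xs /\ lookup xs u x = Some c.
Proof.
  revert u; induction xs as [|y xs IH]; intros [|d u] Hnd Hlen Hc;
    simpl in *; try lia; try tauto.
  inversion Hnd as [|? ? Hy_notin Hnd']; subst.
  destruct Hc as [<-|Hc].
  - exists y. rewrite Nat.eqb_refl. auto.
  - destruct (IH u Hnd' ltac:(lia) Hc) as [x [Hx Hlk]].
    exists x. split; auto.
    destruct (Nat.eqb_spec x y); subst; tauto.
Qed.

Lemma ssat_subst_appears {P C : Type} (h : history P C) xs u x c (s : sguard P C) :
  In x (svars s) -> lookup xs u x = Some c ->
  forall j, 1 <= j -> ssat h j (ssubst xs u s) -> appears_in h c.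
Proof.
  intros Hx Hlk. induction s as [p ts| a IHa b IHb | a IHa | a IHa];
    intros j Hj Hs; simpl in *.
  - destruct Hs as [Hrange [cs [Hvals Hev]]].
    exists (nth (j - 1) h []). split; [apply nth_In; lia|].
    exists (p, cs). split; auto. simpl.
    apply in_flat_map in Hx as [[y|d] [Ht Hy]]; simpl in Hy; [|tauto].
    destruct Hy as [->|[]].
    assert (Hval : In (Some c) (map term_val (map (subst_term xs u) ts))).
    { assert (Hsub : term_val (subst_term xs u (TVar x)) = Some c)
        by (simpl; rewrite Hlk; reflexivity).
      rewrite <- Hsub. do 2 apply in_map. exact Ht. }
    rewrite Hvals, in_map_iff in Hval.
    destruct Hval as [c' [Heq Hc']]. congruence.
  - apply in_app_or in Hx. destruct Hs, Hx; eauto.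
  - apply (IHa Hx j Hj). apply Hs. lia.
  - destruct Hs as [j' [Hj' Hs]]. apply (IHa Hx j'); [lia | exact Hs].
Qed.

Lemma psat_subst_appears {P C : Type} (h : history P C) xs u x c (G : pguard P C) :
  positive_guard xs G -> In x xs -> lookup xs u x = Some c ->
  forall i, 1 <= i -> psat h i (psubst xs u G) -> appears_in h c.
Proof.
  intros HG Hx Hlk.
  induction G as [s | a IHa b IHb | a IHa b IHb | a IHa | a IHa | a IHa b IHb];
    intros i Hi Hs; simpl in *.
  - eapply ssat_subst_appears; eauto. apply HG, Hx.
  - destruct HG, Hs; eauto.
  - destruct HG, Hs; eauto.
  - apply (IHa HG i Hi). apply Hs. lia.
  - destruct Hs as [j [Hj Hs]]. apply (IHa HG j); [lia | exact Hs].
  - destruct HG as [_ HGb], Hs as [j [Hj [Hs _]]].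
    apply (IHb HGb j); [lia | exact Hs].
Qed.

Lemma solution_constants {P C : Type} (h : history P C) xs (G : pguard P C) u :
  NoDup xs -> positive_guard xs G -> is_solution h xs G u ->
  incl u (history_constants h).
Proof.
  intros Hnd HG [Hlen [Hh Hs]] c Hc.
  apply appears_in_history_constants.
  destruct (lookup_complete xs u c Hnd Hlen Hc) as [x [Hx Hlk]].
  exact (psat_subst_appears h xs u x c G HG Hx Hlk _ Hh Hs).
Qed.

Fixpoint words {A : Type} (n : nat) (l : list A) : list (list A) :=
  match n with
  | 0 => [[]]
  | S n => flat_map (fun a => map (cons a) (words n l)) l
  end.

Lemma in_words {A : Type} (l u : list A) : incl u l -> In u (words (length u) l).
Proof.
  induction u as [|a u IH]; intros Hu; simpl; auto.
  apply in_flat_map. exists a. split.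
  - apply Hu. now left.
  - apply in_map, IH. intros b Hb. apply Hu. now right.
Qed.

Theorem mainTheorem7 (P C : Type) (xs : list nat) (G : pguard P C) (h : history P C) :
  NoDup xs -> positive_guard xs G ->
  (exists L : list (list C), forall u, is_solution h xs G u -> In u L) /\
  (forall u, is_solution h xs G u -> forall c, In c u -> appears_in h c).
Proof.
  intros Hnd HG. split.
  - exists (words (length xs) (history_constants h)). intros u Hu.
    rewrite <- (proj1 Hu).
    apply in_words, (solution_constants h xs G u Hnd HG Hu).
  - intros u Hu c Hc. apply appears_in_history_constants.
    exact (solution_constants h xs G u Hnd HG Hu c Hc).
Qed.
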